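(* Let $\mathcal{F}=\{f_i\}_{i=1}^k$ be a frame for $\mathcal{H}_n$ and let $\mathcal{S}=\{I\subseteq\{1,\dots,k\}:\operatorname{span}(\{f_i\}_{i\in I})=\mathcal{H}_n\}$. Then $\operatorname{rob}(\mathcal{F})\le\lfloor\log_2|\mathcal{S}|\rfloor$.
   Context: $\mathcal{H}_n$ is an $n$-dimensional real or complex Hilbert space. A finite sequence of vectors in $\mathcal{H}_n$ is a frame for $\mathcal{H}_n$ iff it spans $\mathcal{H}_n$. A frame $\{f_i\}_{i=1}^k$ is robust to $r$ erasures if for every index set $I\subseteq\{1,\dots,k\}$ with $|I|=r$, the sequence $\{f_i\}_{i\notin I}$ still spans $\mathcal{H}_n$. The maximum robustness $\operatorname{rob}(\mathcal{F})$ is the largest $r$ such that $\mathcal{F}$ is robust to $r$ erasures. *)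

From HB Require Import structures.
From mathcomp Require Import all_boot all_order all_algebra.
From mathcomp Require Import complex.
From mathcomp Require Import reals.
Set Implicit Arguments. Unset Strict Implicit. Unset Printing Implicit Defensive.
Import Order.TTheory GRing.Theory Num.Theory.
Local Open Scope ring_scope.

(* Vectors of H_n = K^n are row vectors 'rV[K]_n; a finite sequence
   {f_i}_{i=1}^k is f : 'I_k -> 'rV[K]_n (indices shifted to 0..k-1). *)

Definition spans (K : fieldType) (n k : nat) (f : 'I_k -> 'rV[K]_n)
  (I : {set 'I_k}) : bool :=
  row_full (\sum_(i in I) <<f i>>)%MS.

Definition frame (K : fieldType) (n k : nat) (f : 'I_k -> 'rV[K]_n) : bool :=
  spans f setT.

Definition robust (K : fieldType) (n k : nat) (f : 'I_k -> 'rV[K]_n)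
  (r : nat) : bool :=
  [forall I : {set 'I_k}, (#|I| == r) ==> spans f (~: I)].

(* maximum robustness: largest r (among 0..k, the meaningful range) such
   that f is robust to r erasures *)
Definition rob (K : fieldType) (n k : nat) (f : 'I_k -> 'rV[K]_n) : nat :=
  (\max_(r < k.+1 | robust f r) r)%N.

Definition spanning_sets (K : fieldType) (n k : nat) (f : 'I_k -> 'rV[K]_n)
  : {set {set 'I_k}} :=
  [set I : {set 'I_k} | spans f I].

From HB Require Import structures.
From mathcomp Require Import all_boot all_order all_algebra.
From mathcomp Require Import complex.
From mathcomp Require Import reals.
Set Implicit Arguments. Unset Strict Implicit. Unset Printing Implicit Defensive.
Local Open Scope ring_scope.

(* If f is robust to r erasures, remove some fixed set A of r indices: the
   complement of A spans, hence so does the complement of every B \subset A.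
   These are 2^r distinct spanning index sets, so 2^r <= |S|. *)

Section SpanningSets.

Variables (K : fieldType) (n k : nat) (f : 'I_k -> 'rV[K]_n).

Lemma spansS (I J : {set 'I_k}) : I \subset J -> spans f I -> spans f J.
Proof.
move=> sIJ; rewrite /spans -!sub1mx => /submx_trans; apply.
apply/sumsmx_subP => i Ii; apply: (sumsmx_sup i) => //.
exact: (subsetP sIJ).
Qed.

Lemma exists_set_card (r : nat) : (r <= k)%N -> exists A : {set 'I_k}, #|A| = r.
Proof.
move=> le_rk; exists [set widen_ord le_rk i | i : 'I_r].
by rewrite card_imset ?card_ord // => i j /(congr1 val) /= /val_inj.
Qed.

Lemma robust_spanning_sets_card (r : nat) :
  (r <= k)%N -> robust f r -> (2 ^ r <= #|spanning_sets f|)%N.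
Proof.
move=> /exists_set_card [A cardA] /forallP/(_ A); rewrite cardA eqxx /= => spanCA.
rewrite -cardA -card_powerset -(card_imset _ (@setC_inj _)).
apply/subset_leq_card/subsetP => J /imsetP [B]; rewrite inE => sBA ->.
by rewrite inE; apply: spansS spanCA; rewrite setCS.
Qed.

Lemma rob_le_trunc_log : (rob f <= trunc_log 2 #|spanning_sets f|)%N.
Proof.
apply/bigmax_leqP => r robust_r.
apply: (trunc_log_max (isT : (1 < 2)%N)).
exact: robust_spanning_sets_card (ltn_ord r) robust_r.
Qed.

End SpanningSets.

Theorem proposition2p1 (R : realType) :
  (forall (n k : nat) (f : 'I_k -> 'rV[R]_n),
     frame f -> (rob f <= trunc_log 2 #|spanning_sets f|)%N) /\
  (forall (n k : nat) (f : 'I_k -> 'rV[R[i]]_n),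
     frame f -> (rob f <= trunc_log 2 #|spanning_sets f|)%N).
Proof. by split=> n k f _; apply: rob_le_trunc_log. Qed.
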